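(* Let $\kappa$ satisfy (A-$\kappa$) in the context, and let $0<\delta_0<1$ and $r_0>0$. Then for every positive integer $k$ there exist $\mu=\mu(r_0,\delta_0,k)>0$ and a positive integer $i=i(r_0,\delta_0,k)$ such that $$\inf_{x\in B_{kr_0}(0)}\sum_{j=0}^{i}\frac{(\mathcal{K}^ju)(x)}{j!}\ge\mu$$ for every $u\in L^\infty(\mathbb{R}^N)$ with $u\ge0$ and $\int_{B_{r_0}(0)}u\,dx\ge\delta_0$. In particular, for such $u$, $(e^{\mathcal{K}}u)(x)\ge\mu$ for all $x\in B_{kr_0}(0)$.
   Context: Assumption (A-$\kappa$): $\kappa\in C^1(\mathbb{R}^N,[0,\infty))$, $\kappa(0)>0$, $\int_{\mathbb{R}^N}\kappa=1$, and there are $\mu',M>0$ with $\kappa(x)\le e^{-\mu'|x|}$ and $|\nabla\kappa(x)|\le e^{-\mu'|x|}$ for $|x|\ge M$. $\mathcal{K}$ is the convolution operator $(\mathcal{K}u)(x)=\int_{\mathbb{R}^N}\kappa(y-x)u(y)\,dy$ on $L^\infty(\mathbb{R}^N)$, $\mathcal{K}^j$ its $j$-th power ($\mathcal{K}^0=I$), $e^{\mathcal{K}}=\sum_{j\ge0}\mathcal{K}^j/j!$, and $B_r(x_0)=\{x\in\mathbb{R}^N:|x-x_0|<r\}$. *)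

From HB Require Import structures.
From mathcomp Require Import all_boot all_order all_algebra.
From mathcomp Require Import all_classical all_reals all_analysis.
Set Implicit Arguments. Unset Strict Implicit. Unset Printing Implicit Defensive.
Import Order.TTheory GRing.Theory Num.Theory.
Import numFieldNormedType.Exports.
Local Open Scope classical_set_scope.
Local Open Scope ring_scope.

Definition enorm (R : realType) (N : nat) (x : 'rV[R]_N) : R :=
  Num.sqrt (\sum_(i < N) x ord0 i ^+ 2).

Definition eball (R : realType) (N : nat) (x0 : 'rV[R]_N) (r : R) : set 'rV[R]_N :=
  [set x | enorm (x - x0) < r].

Definition evec (R : realType) (N : nat) (i : 'I_N) : 'rV[R]_N := delta_mx ord0 i.

Definition grad (R : realType) (N : nat) (f : 'rV[R]_N -> R) (x : 'rV[R]_N) : 'rV[R]_N :=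
  \row_(i < N) ('D_(evec R i) f x).

Definition C1 (R : realType) (N : nat) (f : 'rV[R]_N -> R) : Prop :=
  (forall (i : 'I_N) (x : 'rV[R]_N), derivable f x (evec R i)) /\
  (forall i : 'I_N, continuous (fun x => 'D_(evec R i) f x)).

(* Borel measurability of a real function on R^N: measurability with respect to
   the product (= Borel) sigma-algebra on N.-tuple R. *)
Definition RN_measurable (R : realType) (N : nat) (f : 'rV[R]_N -> R) : Prop :=
  measurable_fun [set: N.-tuple R] (fun t : N.-tuple R => f (\row_(i < N) tnth t i)).

(* Lebesgue integral over R^N of a NONNEGATIVE measurable function, computed as
   the iterated one-dimensional Lebesgue integral (Tonelli).  Coordinate n is
   integrated last at level n.+1. *)
Fixpoint iint (R : realType) (n : nat) (g : (nat -> R) -> \bar R) (v : nat -> R)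
  : \bar R :=
  match n with
  | 0 => g v
  | n'.+1 => (\int[@lebesgue_measure R]_(t in [set: R])
               iint n' g (fun k => if k == n' then t else v k))%E
  end.

Definition RNint (R : realType) (N : nat) (f : 'rV[R]_N -> \bar R) : \bar R :=
  iint N (fun v => f (\row_(i < N) v (nat_of_ord i))) (fun _ => 0).

Definition Kop (R : realType) (N : nat) (kappa : 'rV[R]_N -> R)
  (u : 'rV[R]_N -> \bar R) (x : 'rV[R]_N) : \bar R :=
  RNint (fun y => ((kappa (y - x))%:E * u y)%E).

Fixpoint Kpow (R : realType) (N : nat) (kappa : 'rV[R]_N -> R) (j : nat)
  (u : 'rV[R]_N -> \bar R) : 'rV[R]_N -> \bar R :=
  match j with
  | 0 => u
  | j'.+1 => Kop kappa (Kpow kappa j' u)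
  end.

Definition A_kappa (R : realType) (N : nat) (kappa : 'rV[R]_N -> R) : Prop :=
  [/\ C1 kappa,
      (forall x, 0 <= kappa x),
      0 < kappa 0,
      RNint (fun x => (kappa x)%:E) = 1%E &
      exists mu' M : R, [/\ 0 < mu', 0 < M &
        forall x, M <= enorm x ->
          kappa x <= expR (- (mu' * enorm x)) /\
          enorm (grad kappa x) <= expR (- (mu' * enorm x))]].

(* Since kappa is C^1 it is continuous, so kappa >= c := kappa(0)/2 on a
   sup-norm ball of some radius s.  Cutting [-r0, r0]^N into finitely many
   cubes of side at most s/2, one of them carries a fixed fraction of the mass
   delta0 of u, and then K u is bounded below on the cube of half-side 3s/4
   around its centre.  Each further application of K enlarges by s/4 the cube
   on which a positive lower bound holds, at the price of a factor
   c (s/4)^N; after J steps that cube contains B_{k r0}(0), and the single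
   term K^(J+1) u / (J+1)! bounds the partial sums and the whole exponential
   series from below. *)

From HB Require Import structures.
From mathcomp Require Import all_boot all_order all_algebra.
From mathcomp Require Import all_classical all_reals all_analysis.
From mathcomp Require Import measurable_realfun lra ring.
Set Implicit Arguments. Unset Strict Implicit. Unset Printing Implicit Defensive.
Import Order.TTheory GRing.Theory Num.Theory.
Import numFieldNormedType.Exports.
Local Open Scope classical_set_scope.
Local Open Scope ring_scope.

Section iterated_integral.
Variable R : realType.
Local Notation leb := (@lebesgue_measure R).
Local Open Scope ereal_scope.
Implicit Types (g : (nat -> R) -> \bar R) (v : nat -> R).

(* No measurability is needed: a nonnegative integral is a supremum over the
   simple functions below the integrand. *)
Lemma ge0_le_integralT (f1 f2 : R -> \bar R) :
  (forall x, 0 <= f1 x) -> (forall x, f1 x <= f2 x) ->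
  \int[leb]_x f1 x <= \int[leb]_x f2 x.
Proof.
move=> f1_ge0 f12.
have f2_ge0 x : 0 <= f2 x by apply: le_trans (f12 x).
rewrite !ge0_integralTE //; apply: ereal_sup_le => _ [h hf1 <-].
by exists h => //= x; apply: le_trans (hf1 x) (f12 x).
Qed.

Lemma iint_ge0 n g v : (forall w, 0 <= g w) -> 0 <= iint n g v.
Proof.
move=> g_ge0; elim: n v => [|n IHn] v /=; first exact: g_ge0.
by apply: integral_ge0 => t _; apply: IHn.
Qed.

Lemma le_iint n g1 g2 v : (forall w, 0 <= g1 w) ->
  (forall w, g1 w <= g2 w) -> iint n g1 v <= iint n g2 v.
Proof.
move=> g1_ge0 g12; elim: n v => [|n IHn] v /=; first exact: g12.
by apply: ge0_le_integralT => t; [apply: iint_ge0 | apply: IHn].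
Qed.

Lemma iint_box_ge n g v (l : nat -> R) (h a : R) :
  (0 <= h)%R -> (0 <= a)%R -> (forall w, 0 <= g w) ->
  (forall w, (forall k, (k < n)%N -> (l k <= w k <= l k + h)%R) ->
     (forall k, (n <= k)%N -> w k = v k) -> a%:E <= g w) ->
  (a * h ^+ n)%:E <= iint n g v.
Proof.
move=> h_ge0 a_ge0 g_ge0; elim: n v => [|n IHn] v g_box /=.
  by rewrite expr0 mulr1; apply: g_box => // k.
have b_ge0 : (0 <= a * h ^+ n)%R by rewrite mulr_ge0 // exprn_ge0.
apply: (@le_trans _ _ (\int[leb]_t ((a * h ^+ n) * \1_`[l n, l n + h] t)%:E)).
  under eq_integral do rewrite EFinM.
  rewrite ge0_integralZl_EFin //; last first.
    by apply/measurable_EFinP; apply: measurable_indic.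
  rewrite integral_indic // setIT.
  have := @lebesgue_measure_itv R `[l n, l n + h]%R; rewrite /= => ->.
  rewrite lte_fin; case: ltP => h_gt0.
    by rewrite -EFinB -EFinM addrAC subrr add0r exprSr mulrA.
  have -> : h = 0%R.
    by apply/eqP; rewrite eq_le h_ge0 andbT -(lerD2l (l n)) addr0.
  by rewrite expr0n /= !mulr0 mule0.
apply: ge0_le_integralT => t; first by rewrite lee_fin mulr_ge0 // indicE.
rewrite indicE; have [t_in|] := boolP (t \in _); last by rewrite mulr0 iint_ge0.
rewrite mulr1; apply: IHn => w w_box w_eq; apply: g_box.
  move=> k; rewrite ltnS leq_eqVlt => /orP[/eqP ->|]; last exact: w_box.
  by rewrite (w_eq n (leqnn n)) eqxx; move: t_in; rewrite inE /= in_itv.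
move=> k n_lt_k; rewrite (w_eq k (ltnW n_lt_k)) ifF //.
by apply/negbTE; rewrite neq_ltn n_lt_k orbT.
Qed.

(* [nat -> R] carries no sigma-algebra, so measurability of [g] is expressed
   through every measurable family of coordinates. *)
Definition coord_measurable g : Prop :=
  forall (d : measure_display) (X : measurableType d) (Phi : X -> nat -> R),
    (forall k, measurable_fun setT (fun x => Phi x k)) ->
    measurable_fun setT (fun x => g (Phi x)).

Lemma coord_measurable_iint n g : coord_measurable g -> (forall w, 0 <= g w) ->
  coord_measurable (iint n g).
Proof.
move=> g_meas g_ge0; elim: n => [|n IHn] //= d X Phi Phi_meas.
pose F (p : X * R) := iint n g (fun k => if k == n then p.2 else Phi p.1 k).
have F_meas : measurable_fun setT F.
  apply: IHn => k; case: (k == n); first exact: measurable_snd.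
  exact: measurableT_comp (Phi_meas k) measurable_fst.
have F_ge0 p : 0 <= F p by apply: iint_ge0.
exact: (measurable_fun_fubini_tonelli_F (m2 := leb) F F_meas F_ge0).
Qed.

Lemma measurable_iint_update n g v : coord_measurable g -> (forall w, 0 <= g w) ->
  measurable_fun setT (fun t => iint n g (fun k => if k == n then t else v k)).
Proof.
move=> g_meas g_ge0; apply: (coord_measurable_iint n g_meas g_ge0) => k.
by case: (k == n); [apply: measurable_id | apply: measurable_cst].
Qed.

Lemma coord_measurable_sum (I : Type) (s : seq I) (G : I -> (nat -> R) -> \bar R) :
  (forall i, coord_measurable (G i)) -> coord_measurable (fun w => \sum_(i <- s) G i w).
Proof.
move=> G_meas d X Phi Phi_meas; elim: s => [|i s IHs].
  by under eq_fun do rewrite big_nil; apply: measurable_cst.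
under eq_fun do rewrite big_cons.
exact: emeasurable_funD (G_meas i _ _ Phi Phi_meas) IHs.
Qed.

Lemma iint0 n v : iint n (fun _ => 0) v = 0.
Proof.
elim: n v => [|n IHn] v //=.
by under eq_integral do rewrite IHn; apply: integral0.
Qed.

Lemma iintD n g1 g2 v : coord_measurable g1 -> coord_measurable g2 ->
  (forall w, 0 <= g1 w) -> (forall w, 0 <= g2 w) ->
  iint n (fun w => g1 w + g2 w) v = iint n g1 v + iint n g2 v.
Proof.
move=> g1_meas g2_meas g1_ge0 g2_ge0; elim: n v => [|n IHn] v //=.
under eq_integral do rewrite IHn.
apply: ge0_integralD => //.
- by move=> t _; apply: iint_ge0.
- exact: measurable_iint_update.
- by move=> t _; apply: iint_ge0.
- exact: measurable_iint_update.
Qed.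

Lemma iintZ n g v (c : R) : coord_measurable g -> (forall w, 0 <= g w) ->
  (0 <= c)%R -> iint n (fun w => c%:E * g w) v = c%:E * iint n g v.
Proof.
move=> g_meas g_ge0 c_ge0; elim: n v => [|n IHn] v //=.
under eq_integral do rewrite IHn.
apply: ge0_integralZl_EFin => //; first by move=> t _; apply: iint_ge0.
exact: measurable_iint_update.
Qed.

Lemma iint_sum n (I : Type) (s : seq I) (G : I -> (nat -> R) -> \bar R) v :
  (forall i, coord_measurable (G i)) -> (forall i w, 0 <= G i w) ->
  iint n (fun w => \sum_(i <- s) G i w) v = \sum_(i <- s) iint n (G i) v.
Proof.
move=> G_meas G_ge0; elim: s => [|i s IHs].
  by under eq_fun do rewrite big_nil; rewrite big_nil iint0.
under eq_fun do rewrite big_cons; rewrite big_cons -IHs.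
apply: iintD => //; first exact: coord_measurable_sum.
by move=> w; apply: sume_ge0 => j _.
Qed.

End iterated_integral.

Section RN_integral.
Variables (R : realType) (N : nat).
Local Open Scope ereal_scope.

Definition row_of (w : nat -> R) : 'rV[R]_N := \row_(i < N) w i.

Lemma RNint_ge0 (f : 'rV[R]_N -> \bar R) : (forall y, 0 <= f y) -> 0 <= RNint f.
Proof. by move=> f_ge0; apply: iint_ge0. Qed.

Lemma RNint_box_ge (f : 'rV[R]_N -> \bar R) (l : 'I_N -> R) (h a : R) :
  (0 <= h)%R -> (0 <= a)%R -> (forall y, 0 <= f y) ->
  (forall y : 'rV[R]_N, (forall i, l i <= y ord0 i <= l i + h)%R -> a%:E <= f y) ->
  (a * h ^+ N)%:E <= RNint f.
Proof.
move=> h_ge0 a_ge0 f_ge0 f_box.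
pose ln k := if insub k is Some i then l i else 0%R.
have lnE (i : 'I_N) : ln i = l i by rewrite /ln valK.
apply: (iint_box_ge (l := ln)) => // w w_box _; apply: f_box => i.
by rewrite mxE -lnE; apply: w_box.
Qed.

Lemma measurable_row_of (u : 'rV[R]_N -> R) (d : measure_display)
    (X : measurableType d) (Phi : X -> nat -> R) :
  RN_measurable u -> (forall k, measurable_fun setT (fun x => Phi x k)) ->
  measurable_fun setT (fun x => u (row_of (Phi x))).
Proof.
move=> u_meas Phi_meas.
have -> : (fun x => u (row_of (Phi x))) = (fun t : N.-tuple R =>
    u (\row_(i < N) tnth t i)) \o (fun x => [tuple Phi x i | i < N]).
  by apply: funext => x /=; congr u; apply/rowP => i; rewrite !mxE tnth_mktuple.
apply: measurableT_comp; first exact: u_meas.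
apply/measurable_fun_tnthP => i.
by rewrite (_ : _ \o _ = Phi^~ i) //; apply: funext => x /=; rewrite tnth_mktuple.
Qed.

End RN_integral.

Lemma ball_rVP (R : realType) (N : nat) (x y : 'rV[R]_N) (r : R) :
  ball x r y <-> 0 < r /\ forall i, `|x ord0 i - y ord0 i| < r.
Proof.
split=> [[r_gt0 xy]|[r_gt0 xy]]; split=> // i; first exact: xy.
by move=> j; rewrite (ord1 i); apply: xy.
Qed.

Lemma ball_rV_add (R : realType) (N : nat) (x w : 'rV[R]_N) (r : R) :
  ball x r (x + w) <-> ball 0 r w.
Proof. by rewrite -!ball_normE /ball_ /= sub0r opprD addrA subrr add0r. Qed.

Section convolution.
Variables (R : realType) (N : nat) (kappa : 'rV[R]_N -> R).
Hypothesis kappa_ge0 : forall x, 0 <= kappa x.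

Lemma Kop_ge0 (v : 'rV[R]_N -> \bar R) : (forall y, 0 <= v y)%E ->
  forall x, (0 <= Kop kappa v x)%E.
Proof. by move=> v_ge0 x; apply: RNint_ge0 => y; rewrite mule_ge0 ?lee_fin. Qed.

Lemma Kpow_ge0 (v : 'rV[R]_N -> \bar R) : (forall y, 0 <= v y)%E ->
  forall n x, (0 <= Kpow kappa n v x)%E.
Proof. by move=> v_ge0; elim=> [|n IHn] x //=; apply: Kop_ge0. Qed.

Lemma KpowSr n (v : 'rV[R]_N -> \bar R) :
  Kpow kappa n.+1 v = Kpow kappa n (Kop kappa v).
Proof. by elim: n => [|n IHn] //=; rewrite -IHn. Qed.

Variables (c s : R).
Hypotheses (c_ge0 : 0 <= c) (s_gt0 : 0 < s).
Hypothesis kappa_ge : forall y, ball (0 : 'rV[R]_N) s y -> c <= kappa y.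

(* For [x] at sup-distance less than [r + s/4] from [z], the cube of side
   [s/4] placed on the side of [x] facing [z] lies within [s] of [x] and
   within [r] of [z]. *)
Lemma Kop_ball_ge (v : 'rV[R]_N -> \bar R) (z : 'rV[R]_N) (r m : R) :
  (forall y, 0 <= v y)%E -> s / 2 < r -> 0 <= m ->
  (forall y, ball z r y -> m%:E <= v y)%E ->
  forall x : 'rV[R]_N, ball z (r + s / 4) x ->
    ((c * m * (s / 4) ^+ N)%:E <= Kop kappa v x)%E.
Proof.
move=> v_ge0 sr m_ge0 v_ge x /ball_rVP[_ zx].
pose l i : R := if (z ord0 i <= x ord0 i)%R then x ord0 i - s / 2 else x ord0 i + s / 4.
apply: (@RNint_box_ge _ _ _ l).
- by rewrite divr_ge0 // ltW.
- exact: mulr_ge0.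
- by move=> y; rewrite mule_ge0 ?lee_fin.
move=> y y_box.
have y_near i : `|x ord0 i - y ord0 i| < s /\ `|z ord0 i - y ord0 i| < r.
  move: (y_box i) (zx i) s_gt0 sr; rewrite /l !ltr_norml.
  by case: (leP (z ord0 i) (x ord0 i)) => ? /andP[y1 y2] /andP[zx1 zx2] *;
    split; apply/andP; split; lra.
rewrite EFinM; apply: lee_pmul; rewrite ?lee_fin ?mulr_ge0 //.
  apply: kappa_ge; apply/ball_rVP; split=> // i.
  by rewrite !mxE sub0r opprB; case: (y_near i).
apply: v_ge; apply/ball_rVP; split=> [|i]; last by case: (y_near i).
by move: s_gt0 sr; lra.
Qed.

Lemma Kpow_ball_ge (v : 'rV[R]_N -> \bar R) (z : 'rV[R]_N) (r m : R) :
  (forall y, 0 <= v y)%E -> s / 2 < r -> 0 <= m ->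
  (forall y, ball z r y -> m%:E <= v y)%E ->
  forall n (x : 'rV[R]_N), ball z (r + n%:R * (s / 4)) x ->
    (((c * (s / 4) ^+ N) ^+ n * m)%:E <= Kpow kappa n v x)%E.
Proof.
move=> v_ge0 sr m_ge0 v_ge; elim=> [|n IHn] x.
  by rewrite mul0r addr0 expr0 mul1r; apply: v_ge.
rewrite mulrSr mulrDl mul1r addrA => x_near.
have -> : (c * (s / 4) ^+ N) ^+ n.+1 * m =
    c * ((c * (s / 4) ^+ N) ^+ n * m) * (s / 4) ^+ N by rewrite exprSr; ring.
apply: (@Kop_ball_ge _ _ _ _ (Kpow_ge0 v_ge0 n) _ _ IHn) => //.
- have : 0 <= n%:R * (s / 4) by rewrite mulr_ge0 ?divr_ge0 ?(ltW s_gt0).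
  by move: sr; lra.
- by rewrite mulr_ge0 ?exprn_ge0 ?mulr_ge0 ?exprn_ge0 ?divr_ge0 ?(ltW s_gt0).
Qed.

End convolution.

Section C1_continuity.
Variables (R : realType) (N : nat).
Implicit Types (f : 'rV[R]_N -> R) (x z : 'rV[R]_N).

Lemma mvt_evec f (j : 'I_N) x (a M : R) :
  (forall y, derivable f y (evec R j)) ->
  (forall t, `|t| <= `|a| -> `|'D_(evec R j) f (x + t *: evec R j)| <= M) ->
  `|f (x + a *: evec R j) - f x| <= M * `|a|.
Proof.
move=> f_der D_le; set e := evec R j.
pose phi t := f (x + t *: e).
have phi_quot t : (fun h : R => h^-1 *: ((phi \o shift t) (h *: (1 : R)) - phi t)) =
    (fun h => h^-1 *: ((f \o shift (x + t *: e)) (h *: e) - f (x + t *: e))).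
  apply: funext => h /=; rewrite /phi; congr (_ *: (f _ - _)).
  by rewrite [h *: 1]mulr1 scalerDl addrCA addrA.
have phi_der t : derivable phi t 1 by rewrite /derivable phi_quot; apply: f_der.
have phi_is_derive t : is_derive t (1 : R) phi ('D_e f (x + t *: e)).
  by apply: DeriveDef => //; rewrite /derive phi_quot.
have phi_cont a' b' : {within `[a', b'], continuous phi}.
  by apply: derivable_within_continuous => t _; apply: phi_der.
have M_ge0 : 0 <= M by apply: le_trans (D_le 0 _); rewrite ?normr0.
have [a_lt0|a_gt0|->] := ltgtP a 0; last by rewrite scale0r addr0 subrr !normr0 mulr0.
- have [t t_in] := MVT a_lt0 (fun t _ => phi_is_derive t) (phi_cont a 0).
  rewrite /phi scale0r addr0 => phi_diff.
  rewrite distrC phi_diff normrM sub0r normrN ler_wpM2r //.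
  apply: D_le; move: t_in; rewrite in_itv /= => /andP[t1 t2].
  by rewrite !ltr0_norm // ?lerN2 ?ltW.
- have [t t_in] := MVT a_gt0 (fun t _ => phi_is_derive t) (phi_cont 0 a).
  rewrite /phi scale0r addr0 => ->.
  rewrite normrM subr0 ler_wpM2r //.
  apply: D_le; move: t_in; rewrite in_itv /= => /andP[t1 t2].
  by rewrite !gtr0_norm // ltW.
Qed.

Definition trunc_row z (j : nat) : 'rV[R]_N :=
  \row_(i < N) (if (i < j)%N then z ord0 i else 0).

Lemma trunc_row0 z : trunc_row z 0 = 0.
Proof. by apply/rowP => i; rewrite !mxE. Qed.

Lemma trunc_rowN z : trunc_row z N = z.
Proof. by apply/rowP => i; rewrite !mxE ltn_ord. Qed.

Lemma trunc_row_evecE z (j : 'I_N) (t : R) (i : 'I_N) :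
  (trunc_row z j + t *: evec R j) ord0 i =
  if (i < j)%N then z ord0 i else if i == j then t else 0.
Proof.
rewrite !mxE eqxx /=; case: ltngtP => [ij|ji|/val_inj ->].
- by rewrite (_ : i == j = false) ?mulr0 ?addr0 // -val_eqE /= ltn_eqF.
- by rewrite (_ : i == j = false) ?mulr0 ?addr0 // -val_eqE /= gtn_eqF.
- by rewrite eqxx mulr1 add0r.
Qed.

Lemma trunc_rowS z (j : 'I_N) : trunc_row z j.+1 = trunc_row z j + z ord0 j *: evec R j.
Proof.
apply/rowP => i; rewrite trunc_row_evecE mxE ltnS leq_eqVlt.
case: ltngtP => [ij|ji|/val_inj ->]; rewrite ?ltnn ?eqxx //= ?orbF.
by rewrite -val_eqE /= gtn_eqF.
Qed.

Lemma ball_trunc_row_evec z (j : 'I_N) (s t : R) :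
  ball 0 s z -> `|t| < s -> ball 0 s (trunc_row z j + t *: evec R j).
Proof.
move=> /ball_rVP[s_gt0 z_lt] t_lt; apply/ball_rVP; split=> // i.
rewrite mxE sub0r normrN trunc_row_evecE.
case: ifP => _; first by move: (z_lt i); rewrite mxE sub0r normrN.
by case: ifP; rewrite ?normr0.
Qed.

Lemma C1_ball_lipschitz f x : C1 f ->
  exists del L : R, [/\ 0 < del, 0 <= L &
    forall s z, s <= del -> ball 0 s z -> `|f (x + z) - f x| <= L * s].
Proof.
move=> [f_der D_cont]; pose D i y := 'D_(evec R i) f y.
have [del del_gt0 D_le] :
    exists2 del : R, 0 < del & forall i y, ball x del y -> `|D i y| <= `|D i x| + 1.
  have : \forall y \near x, forall i, `|D i x - D i y| < 1.
    apply: (@filter_forall _ _ (fun i y => `|D i x - D i y| < 1) (nbhs x)) => i.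
    exact: (cvgr_dist_lt _ _ (D_cont i x)).
  move=> /nbhs_ballP[del del_gt0 D_near]; exists del => // i y /D_near /(_ i) Dxy.
  by rewrite -[D i y](subKr (D i x)) (le_trans (ler_normB _ _)) // lerD2l ltW.
exists del, (\sum_(i < N) (`|D i x| + 1)); split => //.
  by apply: sumr_ge0 => i _; rewrite addr_ge0.
move=> s z s_le z_ball; have s_gt0 : 0 < s by case/ball_rVP: z_ball.
have step (j : 'I_N) :
    `|f (x + trunc_row z j.+1) - f (x + trunc_row z j)| <= (`|D j x| + 1) * s.
  rewrite trunc_rowS addrA.
  apply: le_trans (mvt_evec (M := `|D j x| + 1) (f_der j) _) _.
    move=> t t_le; apply: D_le; rewrite -addrA ball_rV_add.
    apply: (le_ball s_le); apply: ball_trunc_row_evec => //; apply: le_lt_trans t_le _.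
    by move: z_ball => /ball_rVP[_ /(_ j)]; rewrite mxE sub0r normrN.
  by rewrite ler_wpM2l ?addr_ge0 // ltW //; move: z_ball => /ball_rVP[_ /(_ j)];
    rewrite mxE sub0r normrN.
rewrite -[in x + z](trunc_rowN z) -[in f x](addr0 x) -(trunc_row0 z).
rewrite -(telescope_sumr (fun j => f (x + trunc_row z j))) // big_mkord mulr_suml.
by apply: le_trans (ler_norm_sum _ _ _) _; apply: ler_sum => j _; apply: step.
Qed.

End C1_continuity.

Lemma C1_continuous (R : realType) (N : nat) (f : 'rV[R]_N -> R) : C1 f -> continuous f.
Proof.
move=> f_C1 x; have [del [L [del_gt0 L_ge0 f_lip]]] := C1_ball_lipschitz x f_C1.
apply/(@cvgrPdist_lt _ _ _ _ (nbhs_filter x)) => e e_gt0.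
pose s := Num.min del (e / (L + 1)).
have s_gt0 : 0 < s by rewrite lt_min del_gt0 divr_gt0 // ltr_wpDl.
have sL_le : s * (L + 1) <= e by rewrite -ler_pdivlMr ?ltr_wpDl // ge_min lexx orbT.
apply/nbhs_ballP; exists s => // y xy.
have y_near : ball 0 s (y - x) by rewrite -(ball_rV_add x) subrKC.
have s_le : s <= del by rewrite ge_min lexx.
have := f_lip s _ s_le y_near; rewrite subrKC distrC => /le_lt_trans; apply.
by move: s_gt0 sL_le; nra.
Qed.

Lemma continuous_ge_half_ball (R : realType) (M : pseudoMetricType R)
    (f : M -> R) (x : M) :
  {for x, continuous f} -> 0 < f x ->
  exists2 s : R, 0 < s & forall y, ball x s y -> f x / 2 <= f y.
Proof.
move=> f_cont fx_gt0; have half_gt0 : 0 < f x / 2 by rewrite divr_gt0.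
have : \forall y \near x, `|f x - f y| < f x / 2 by apply: cvgr_dist_lt.
move=> /nbhs_ballP[s s_gt0 f_near].
by exists s => // y /f_near /=; rewrite ltr_norml => /andP[_]; lra.
Qed.

Lemma sume_ge_pigeonhole (R : realType) (I : finType) (X : I -> \bar R) (a d : R) :
  a *+ #|I| < d -> (d%:E <= \sum_i X i)%E -> exists i, (a%:E <= X i)%E.
Proof.
move=> ad d_le; apply/not_existsP => X_lt; move: ad; apply/negP; rewrite -leNgt.
have X_le i : (X i <= a%:E)%E by rewrite leNgt; apply/negP => /ltW /(X_lt i).
rewrite -lee_fin (le_trans d_le) // -sumr_const -sumEFin.
by apply: lee_sum => i _.
Qed.

Lemma indic_itvcc (R : realType) (a b t : R) : \1_`[a, b] t = (a <= t <= b)%R%:R :> R.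
Proof. by rewrite indicE mem_setE in_itv. Qed.

Lemma normr_coord_le_enorm (R : realType) (N : nat) (y : 'rV[R]_N) (i : 'I_N) :
  `|y ord0 i| <= enorm y.
Proof.
rewrite /enorm -sqrtr_sqr ler_sqrt; last by apply: sumr_ge0 => j _; rewrite sqr_ge0.
by rewrite (bigD1 i) //= lerDl sumr_ge0 // => j _; rewrite sqr_ge0.
Qed.

Section subcubes.
Variables (R : realType) (N n : nat) (r0 : R).
Hypotheses (r0_gt0 : 0 < r0) (n_gt0 : (0 < n)%N).
Local Notation index := {ffun 'I_N -> 'I_n}.
Implicit Types (f : index) (y : 'rV[R]_N).

Definition subcube_side : R := 2 * r0 / n%:R.

Definition subcube_corner (f : index) (i : 'I_N) : R := - r0 + (f i)%:R * subcube_side.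

Definition subcube_ind (f : index) (y : 'rV[R]_N) : R :=
  \prod_(i < N) \1_`[subcube_corner f i, subcube_corner f i + subcube_side] (y ord0 i).

Definition subcube_center (f : index) : 'rV[R]_N :=
  \row_(i < N) (subcube_corner f i + subcube_side / 2).

Lemma subcube_side_gt0 : 0 < subcube_side.
Proof. by rewrite divr_gt0 ?mulr_gt0 ?ltr0n. Qed.

Lemma subcube_sideE : n%:R * subcube_side = 2 * r0.
Proof. by rewrite /subcube_side mulrC divfK // pnatr_eq0 -lt0n. Qed.

Lemma subcube_indE f y : subcube_ind f y =
  [forall i, subcube_corner f i <= y ord0 i <= subcube_corner f i + subcube_side]%R%:R.
Proof.
rewrite /subcube_ind; under eq_bigr do rewrite indic_itvcc.
set y_in := [forall _, _]; case: (boolP y_in) => [/forallP y_in_i|].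
  by apply: big1 => i _; rewrite y_in_i.
by move=> /forallPn[i /negbTE i_out]; rewrite (bigD1 i) //= i_out mul0r.
Qed.

Lemma subcube_ind_ge0 f y : 0 <= subcube_ind f y.
Proof. by rewrite subcube_indE ler0n. Qed.

Lemma subcube_center_le f i : `|subcube_center f ord0 i| <= r0.
Proof.
have side_gt0 := subcube_side_gt0; have sideE := subcube_sideE.
have fi_lt : (f i).+1%:R * subcube_side <= n%:R * subcube_side.
  by apply: ler_wpM2r; [apply: ltW | rewrite ler_nat].
rewrite -natr1 mulrDl mul1r in fi_lt.
have fi_ge0 : 0 <= (f i)%:R * subcube_side by rewrite mulr_ge0 ?ler0n ?(ltW side_gt0).
by rewrite mxE /subcube_corner ler_norml; apply/andP; split; lra.
Qed.

Lemma subcube_cover y : (forall i, `|y ord0 i| < r0) -> exists f, subcube_ind f y = 1.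
Proof.
move=> y_lt; have side_gt0 := subcube_side_gt0; have sideE := subcube_sideE.
pose t i := (y ord0 i + r0) / subcube_side.
have t_ge0 i : 0 <= t i.
  by rewrite divr_ge0 ?ltW //; move: (y_lt i); rewrite ltr_norml => /andP[? ?]; lra.
have t_lt i : (Num.trunc (t i) < n)%N.
  rewrite truncn_lt_nat // ltr_pdivrMr // sideE.
  by move: (y_lt i); rewrite ltr_norml => /andP[? ?]; lra.
exists [ffun i => Ordinal (t_lt i)]; rewrite subcube_indE (_ : [forall _, _] = true) //.
apply/forallP => i; rewrite /subcube_corner ffunE /=.
have /andP[t1 t2] := truncn_itv (t_ge0 i).
have tE : t i * subcube_side = y ord0 i + r0 by rewrite /t divfK ?gt_eqF.
rewrite -(ler_pM2r side_gt0) -(ltr_pM2r side_gt0) tE -natr1 mulrDl mul1r in t1 t2.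
by apply/andP; split; lra.
Qed.

Lemma subcube_near_center f y : subcube_ind f y = 1 ->
  forall i, `|subcube_center f ord0 i - y ord0 i| <= subcube_side / 2.
Proof.
rewrite subcube_indE; case: forallP => [y_in _ i|_ /eqP].
  by rewrite mxE ler_norml; move: (y_in i) => /andP[? ?]; apply/andP; split; lra.
by rewrite eq_sym oner_eq0.
Qed.

Lemma coord_measurable_subcube f (u : 'rV[R]_N -> R) : RN_measurable u ->
  coord_measurable (fun w => (subcube_ind f (row_of N w) * u (row_of N w))%:E).
Proof.
move=> u_meas d X Phi Phi_meas; apply/measurable_EFinP; apply: measurable_funM.
  apply: (measurable_prod (h := fun i x => \1_`[subcube_corner f i,
    subcube_corner f i + subcube_side] (row_of N (Phi x) ord0 i))) => i _.
  under eq_fun do rewrite /row_of mxE.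
  by apply: measurableT_comp (Phi_meas i); apply: measurable_indic.
exact: measurable_row_of.
Qed.

Lemma RNint_ball_le_subcubes (u : 'rV[R]_N -> R) :
  RN_measurable u -> (forall y, 0 <= u y) ->
  (RNint (fun y => (\1_(eball 0 r0) y * u y)%:E)
    <= \sum_(f : index) RNint (fun y => (subcube_ind f y * u y)%:E))%E.
Proof.
move=> u_meas u_ge0.
have ind_u_ge0 f y : (0 <= (subcube_ind f y * u y)%:E)%E.
  by rewrite lee_fin mulr_ge0 ?subcube_ind_ge0.
rewrite /RNint -iint_sum; last 2 first.
- by move=> f; apply: coord_measurable_subcube.
- by move=> f w; apply: ind_u_ge0.
apply: le_iint => w; first by rewrite lee_fin mulr_ge0 // indicE.
set y := \row_(i < N) w i; rewrite indicE.
case: (boolP (_ \in _)) => [y_in|_]; last by rewrite mul0r; apply: sume_ge0.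
have y_lt i : `|y ord0 i| < r0.
  apply: le_lt_trans (normr_coord_le_enorm y i) _.
  by move: y_in => /set_mem; rewrite /eball /= subr0.
have [f f_y] := subcube_cover y_lt.
by rewrite (bigD1 f) //= f_y !mul1r leeDl // sume_ge0.
Qed.

Lemma Kop_ge_subcube (kappa : 'rV[R]_N -> R) (c s : R) f (u : 'rV[R]_N -> R) :
  (forall x, 0 <= kappa x) -> 0 <= c -> subcube_side <= s / 2 ->
  (forall y, ball (0 : 'rV[R]_N) s y -> c <= kappa y) ->
  RN_measurable u -> (forall y, 0 <= u y) ->
  forall x, ball (subcube_center f) (3 * s / 4) x ->
  (c%:E * RNint (fun y => (subcube_ind f y * u y)%:E)
    <= Kop kappa (fun y => (u y)%:E) x)%E.
Proof.
move=> kappa_ge0 c_ge0 side_le kappa_ge u_meas u_ge0 x /ball_rVP[s34_gt0 x_near].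
have s_gt0 : 0 < s by move: s34_gt0; lra.
rewrite /RNint -iintZ //; first last.
- by move=> w; rewrite lee_fin mulr_ge0 ?subcube_ind_ge0.
- exact: coord_measurable_subcube.
apply: le_iint => w; first by rewrite lee_fin !mulr_ge0 ?subcube_ind_ge0.
set y := \row_(i < N) w i; rewrite -EFinM lee_fin.
have [y_in|y_out] : subcube_ind f y = 1 \/ subcube_ind f y = 0.
  by rewrite subcube_indE; case: [forall _, _]; [left|right].
2: by rewrite y_out mul0r mulr0 mulr_ge0.
rewrite y_in mul1r ler_wpM2r // kappa_ge //; apply/ball_rVP; split=> // i.
have := subcube_near_center y_in i; move: (x_near i) side_le s_gt0.
by rewrite !mxE sub0r opprB !ltr_norml ler_norml => /andP[? ?] ? ? /andP[? ?];
  apply/andP; split; lra.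
Qed.

End subcubes.

Lemma Kop_ball_ge_of_mass (R : realType) (N : nat) (kappa : 'rV[R]_N -> R)
    (c s r0 d0 : R) :
  (forall x, 0 <= kappa x) -> 0 < c -> 0 < s -> 0 < r0 -> 0 < d0 ->
  (forall y, ball (0 : 'rV[R]_N) s y -> c <= kappa y) ->
  exists2 m : R, 0 < m & forall u : 'rV[R]_N -> R,
    RN_measurable u -> (forall y, 0 <= u y) ->
    (d0%:E <= RNint (fun y => (\1_(eball 0 r0) y * u y)%:E))%E ->
    exists2 z : 'rV[R]_N, (forall i, `|z ord0 i| <= r0) &
      forall x, ball z (3 * s / 4) x -> (m%:E <= Kop kappa (fun y => (u y)%:E) x)%E.
Proof.
move=> kappa_ge0 c_gt0 s_gt0 r0_gt0 d0_gt0 kappa_ge.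
pose n := (Num.trunc (4 * r0 / s)).+1; have n_gt0 : (0 < n)%N by [].
pose K : R := #|{ffun 'I_N -> 'I_n}|%:R.
have K_gt0 : 0 < K by rewrite ltr0n card_ffun card_ord expn_gt0.
have side_le : subcube_side n r0 <= s / 2.
  have : 4 * r0 / s < n%:R by apply: truncnS_gt.
  by rewrite /subcube_side ler_pdivrMr ?ltr0n // ltr_pdivrMr // => ?; lra.
pose a := d0 / (2 * K); have a_gt0 : 0 < a by rewrite divr_gt0 ?mulr_gt0.
exists (c * a) => [|u u_meas u_ge0 u_mass]; first exact: mulr_gt0.
have [f f_mass] : exists f : {ffun 'I_N -> 'I_n}, (a%:E
    <= RNint (fun y => (subcube_ind r0 f y * u y)%:E))%E.
  have := le_trans u_mass (RNint_ball_le_subcubes r0_gt0 n_gt0 u_meas u_ge0).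
  apply: sume_ge_pigeonhole.
  rewrite -mulr_natr -/K (_ : a * K = d0 / 2); first lra.
  by rewrite /a; field; rewrite gt_eqF.
exists (subcube_center r0 f) => [i|x x_near]; first exact: subcube_center_le.
apply: le_trans (Kop_ge_subcube kappa_ge0 (ltW c_gt0) side_le kappa_ge u_meas u_ge0
  x_near).
by rewrite EFinM lee_wpmul2l // lee_fin ltW.
Qed.

Lemma eball0_sub_ball (R : realType) (N : nat) (z x : 'rV[R]_N) (a rho r : R) :
  0 <= a -> (forall i, `|z ord0 i| <= a) -> eball 0 rho x -> rho + a <= r -> ball z r x.
Proof.
move=> a_ge0 z_le; rewrite /eball /= subr0 => x_lt rho_le.
have x_le i : `|x ord0 i| <= enorm x by apply: normr_coord_le_enorm.
have enorm_ge0 : 0 <= enorm x by apply: sqrtr_ge0.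
apply/ball_rVP; split=> [|i]; first lra.
apply: le_lt_trans (ler_normB _ _) _; move: (z_le i) (x_le i); lra.
Qed.

Lemma Kpow_eball_ge (R : realType) (N : nat) (kappa : 'rV[R]_N -> R)
    (c s r0 d0 : R) (k : nat) :
  (forall x, 0 <= kappa x) -> 0 < c -> 0 < s -> 0 < r0 -> 0 < d0 ->
  (forall y, ball (0 : 'rV[R]_N) s y -> c <= kappa y) ->
  exists J : nat, exists2 M : R, 0 < M & forall u : 'rV[R]_N -> R,
    RN_measurable u -> (forall y, 0 <= u y) ->
    (d0%:E <= RNint (fun y => (\1_(eball 0 r0) y * u y)%:E))%E ->
    forall x, eball 0 (k%:R * r0) x ->
      (M%:E <= Kpow kappa J.+1 (fun y => (u y)%:E) x)%E.
Proof.
move=> kappa_ge0 c_gt0 s_gt0 r0_gt0 d0_gt0 kappa_ge.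
have [m m_gt0 Ku_ge] :=
  Kop_ball_ge_of_mass kappa_ge0 c_gt0 s_gt0 r0_gt0 d0_gt0 kappa_ge.
have [J J_big] : exists J : nat, (k%:R + 1) * r0 < J%:R * (s / 4).
  exists (Num.trunc ((k%:R + 1) * r0 / (s / 4))).+1.
  by rewrite -ltr_pdivrMr ?divr_gt0 //; apply: truncnS_gt.
exists J, ((c * (s / 4) ^+ N) ^+ J * m).
  by rewrite mulr_gt0 // exprn_gt0 // mulr_gt0 // exprn_gt0 // divr_gt0.
move=> u u_meas u_ge0 u_mass x x_in.
have [z z_le Ku_ge_z] := Ku_ge u u_meas u_ge0 u_mass.
rewrite KpowSr; apply: (Kpow_ball_ge kappa_ge0 (ltW c_gt0) s_gt0 kappa_ge _ _
  (ltW m_gt0) Ku_ge_z).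
- by apply: Kop_ge0 => // y; rewrite lee_fin.
- lra.
- apply: eball0_sub_ball (ltW r0_gt0) z_le x_in _.
  by move: J_big; rewrite mulrDl mul1r; lra.
Qed.

Lemma ge0_term_le_sum_ord (R : realType) (F : nat -> \bar R) n :
  (forall j, 0 <= F j)%E -> (F n <= \sum_(j < n.+1) F j)%E.
Proof.
by move=> F_ge0; rewrite big_ord_recr /= lee_paddl // sume_ge0.
Qed.

Lemma ge0_sum_ord_le_nneseries (R : realType) (F : nat -> \bar R) n :
  (forall j, 0 <= F j)%E -> (\sum_(j < n) F j <= \sum_(0 <= j <oo) F j)%E.
Proof. by move=> F_ge0; rewrite -(big_mkord xpredT F); apply: nneseries_lim_ge. Qed.

Unset Implicit Arguments.

Theorem proposition2p5 (R : realType) (N : nat) (kappa : 'rV[R]_N -> R)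
  (hk : A_kappa kappa) (delta0 r0 : R)
  (hd0 : 0 < delta0) (hd1 : delta0 < 1) (hr0 : 0 < r0) :
  forall k : nat, (0 < k)%N ->
  exists (mu : R) (i : nat), [/\ 0 < mu, (0 < i)%N &
    forall u : 'rV[R]_N -> R,
      RN_measurable u ->
      (exists C : R, forall y, u y <= C) ->
      (forall y, 0 <= u y) ->
      (delta0%:E <= RNint (fun y => (\1_(eball 0 r0) y * u y)%:E))%E ->
      (mu%:E <= ereal_inf [set (\sum_(j < i.+1)
                  Kpow kappa j (fun y => (u y)%:E) x * ((j`!%:R)^-1)%:E)%E
                | x in eball 0 (k%:R * r0)])%E
      /\ (forall x, eball 0 (k%:R * r0) x ->
            (mu%:E <= \sum_(0 <= j <oo)
                  (Kpow kappa j (fun y => (u y)%:E) x * ((j`!%:R)^-1)%:E))%E)].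
Proof.
case: hk => kappa_C1 kappa_ge0 kappa0_gt0 _ _ k _.
have [s s_gt0 kappa_ge] :=
  continuous_ge_half_ball (@C1_continuous _ _ _ kappa_C1 0) kappa0_gt0.
have c_gt0 : 0 < kappa 0 / 2 by rewrite divr_gt0.
have [J [M M_gt0 KJu_ge]] := Kpow_eball_ge k kappa_ge0 c_gt0 s_gt0 hr0 hd0 kappa_ge.
exists (M / (J.+1)`!%:R), J.+1; split => //; first by rewrite divr_gt0 ?ltr0n ?fact_gt0.
move=> u u_meas _ u_ge0 u_mass.
pose F x j := (Kpow kappa j (fun y => (u y)%:E) x * ((j`!%:R)^-1)%:E)%E.
have F_ge0 x j : (0 <= F x j)%E.
  by rewrite mule_ge0 ?Kpow_ge0 // => [y|]; rewrite lee_fin ?invr_ge0.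
have partial_ge x : eball 0 (k%:R * r0) x ->
    ((M / (J.+1)`!%:R)%:E <= \sum_(j < J.+2) F x j)%E.
  move=> x_in; apply: le_trans (ge0_term_le_sum_ord _ (F_ge0 x)).
  by rewrite EFinM lee_pmul2r ?lte_fin ?invr_gt0 ?ltr0n ?fact_gt0 // KJu_ge.
split=> [|x x_in]; first by apply/ereal_infP => _ [x x_in <-]; apply: partial_ge.
exact: le_trans (partial_ge x x_in) (ge0_sum_ord_le_nneseries _ (F_ge0 x)).
Qed.
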